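(* For every $n\ge1$, $N=2^n$ and $i\in[1..2N]$, let $R_{N,i}$ be the $i$-th row of $\mathsf{ShiftBin}_N$ (a string of length $N(n+2)$). Then every 1D SLP deriving a string that contains $R_{N,i}$ as a substring has size at least $\min\{i,\,2N-i+1\}$.
   Context: Alphabet $\Sigma\supseteq\{0,1,\$\}$. For $N=2^n$, $\mathsf{Bin}_N$ is the $N\times(n+2)$ 2D string (array) whose $i$-th row ($i\in[1..N]$) is $\$\,b_{i-1}\,\$$, where $b_{i-1}$ is the $n$-bit binary representation of $i-1$. $\mathsf{ShiftBin}_N$ is the $2N\times N(n+2)$ array such that for each $j\in[1..N]$, the subarray formed by rows $j,\dots,j+N-1$ and columns $(j-1)(n+2)+1,\dots,j(n+2)$ equals $\mathsf{Bin}_N$, and all other entries are $0$. A 1D SLP is a triple $(\mathcal V,\mathcal S,\rho)$ with a finite set $\mathcal V$ of nonterminals, a start $\mathcal S\in\mathcal V$, and productions $\rho(X)$ each either a character of $\Sigma$ or a concatenation $YZ$ of two nonterminals, with acyclic occurrence relation; it derives the string obtained by recursively expanding $\mathcal S$. Its size is the total number of symbols (nonterminals and characters) on all right-hand sides. *)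

From Stdlib Require Import Relations.
From mathcomp Require Import all_boot.
Set Implicit Arguments. Unset Strict Implicit. Unset Printing Implicit Defensive.

Section Defs.
Variable Sigma : eqType.
(* the three distinguished characters 0, 1, $ of the alphabet *)
Variables (c0 c1 cd : Sigma).

(* Entry (k, l) of Bin_N, N = 2^n, 1-indexed: k in [1..N], l in [1..n+2].
   Row k is  $ b_{k-1} $  with b_{k-1} the n-bit binary representation of
   k-1, most significant bit first. *)
Definition bin_entry (n k l : nat) : Sigma :=
  if (l == 1) || (l == n.+2) then cd
  else if odd ((k - 1) %/ 2 ^ (n - (l - 1))) then c1 else c0.

(* Entry (r, c) of ShiftBin_N, 1-indexed: r in [1..2N], c in [1..N(n+2)].
   Column c lies in block j = (c-1) %/ (n+2) + 1 (columns (j-1)(n+2)+1 .. j(n+2));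
   rows j .. j+N-1 of that block hold Bin_N, everything else is 0. *)
Definition shiftbin_entry (n r c : nat) : Sigma :=
  let j := (c - 1) %/ n.+2 + 1 in
  if (j <= r) && (r <= j + 2 ^ n - 1)
  then bin_entry n (r - j + 1) (c - (j - 1) * n.+2)
  else c0.

Definition shiftbin_row (n i : nat) : seq Sigma :=
  [seq shiftbin_entry n i c | c <- iota 1 (2 ^ n * n.+2)].

Inductive rule (V : Type) : Type :=
  | RChar of Sigma
  | RPair of V & V.

Record SLP (V : finType) := { slp_start : V; slp_rho : V -> rule V }.

Definition occurs (V : finType) (G : SLP V) (X Y : V) : Prop :=
  exists Z, slp_rho G X = RPair Y Z \/ slp_rho G X = RPair Z Y.

Definition acyclic (V : finType) (G : SLP V) : Prop :=
  forall X, ~ clos_trans V (occurs G) X X.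

Inductive expands (V : finType) (G : SLP V) : V -> seq Sigma -> Prop :=
  | ExpChar X a : slp_rho G X = RChar V a -> expands G X [:: a]
  | ExpPair X Y Z u v : slp_rho G X = RPair Y Z ->
      expands G Y u -> expands G Z v -> expands G X (u ++ v).

Definition derives (V : finType) (G : SLP V) (w : seq Sigma) : Prop :=
  expands G (slp_start G) w.

Definition rule_size (V : Type) (r : rule V) : nat :=
  match r with RChar _ => 1 | RPair _ _ => 2 end.

Definition slp_size (V : finType) (G : SLP V) : nat :=
  \sum_(X : V) rule_size (slp_rho G X).
End Defs.

From mathcomp Require Import all_boot zify.
Set Implicit Arguments. Unset Strict Implicit. Unset Printing Implicit Defensive.

(* A factor of length at least 2 of a string derived by an SLP straddles some
   rule X -> Y Z: it is a nonempty suffix of the expansion of Y followed by a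
   nonempty prefix of the expansion of Z.  A factor $x$ with no $ inside x is
   then determined by X: it runs from the last $ of the expansion of Y to the
   first $ of that of Z.  The row R_{N,i} contains min(i, 2N+1-i) - 1 distinct
   rows of Bin_N, all of this form, so the SLP has at least that many pair
   rules; its size is the number of nonterminals plus the number of pair
   rules, which is larger. *)

Section Factors.
Variable T : eqType.
Implicit Types s u v : seq T.

Definition crosses u v s : Prop :=
  exists s1 s2, [/\ s = s1 ++ s2, s1 != [::], s2 != [::], suffix s1 u & prefix s2 v].

Definition delimited (d : T) s : Prop := exists2 x, s = d :: rcons x d & d \notin x.

Lemma prefix_catP s u v :
  prefix s (u ++ v) -> prefix s u \/ exists2 s2, s = u ++ s2 & prefix s2 v.
Proof.
elim: u s => [|a u IHu] s; first by right; exists s.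
case: s => [|b s] /=; first by left.
case/andP=> /eqP-> /IHu[pre_su | [s2 -> pre_s2v]]; first by left; rewrite eqxx.
by right; exists s2.
Qed.

Lemma infix_catP s u v :
  infix s (u ++ v) -> [\/ infix s u, infix s v | crosses u v s].
Proof.
elim: u => [|a u IHu]; first by constructor 2.
rewrite cat_cons infix_consl -cat_cons => /orP[/prefix_catP[pre_s | [s2 def_s pre_s2v]] | /IHu].
- by constructor 1; apply: prefixW.
- case: s2 def_s pre_s2v => [|b s2] def_s pre_s2v.
    by constructor 1; rewrite def_s cats0 infix_refl.
  by constructor 3; exists (a :: u), (b :: s2); split; rewrite ?suffix_refl.
case=> [inf_su | inf_sv | [s1 [s2 [def_s ne_s1 ne_s2 suf_s1u pre_s2v]]]].
- by constructor 1; rewrite -cat1s infix_catl.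
- by constructor 2.
by constructor 3; exists s1, s2; split; rewrite // -cat1s suffix_catr.
Qed.

(* A delimited word crossing the boundary of [u ++ v] is the last [d] of [u]
   followed by everything up to the first [d] of [v]. *)
Lemma crosses_delimitedE d u v s : crosses u v s -> delimited d s ->
  s = d :: rcons (rev (take (index d (rev u)) (rev u)) ++ take (index d v) v) d.
Proof.
move=> [[|a x1] [s2 [-> _ ne_s2 /suffixP[u0 ->] /prefixP[v0 ->]]]] //.
case/lastP: s2 ne_s2 => [//|x2 b] _ [x].
rewrite -rcons_cat => -[-> /rcons_inj[<- ->]].
rewrite mem_cat negb_or => /andP[dx1 dx2].
rewrite cat_rcons index_cat (negbTE dx2) /= eqxx addn0 take_size_cat //.
rewrite rev_cat rev_cons cat_rcons index_cat mem_rev (negbTE dx1) /= eqxx addn0.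
by rewrite take_size_cat ?size_rev // revK.
Qed.

Lemma crosses_delimited_uniq d u v s t :
  crosses u v s -> crosses u v t -> delimited d s -> delimited d t -> s = t.
Proof.
by move=> cs ct ds dt; rewrite (crosses_delimitedE cs ds) (crosses_delimitedE ct dt).
Qed.

End Factors.

Lemma uniq_leq_card_rel (T : eqType) (I : finType) (R : T -> I -> Prop)
    (P : pred I) (L : seq T) :
  uniq L -> {in L, forall s, exists2 y, y \in P & R s y} ->
  {in L &, forall s t y, R s y -> R t y -> s = t} -> size L <= #|P|.
Proof.
elim: L P => [|s L IHL] P //= /andP[sL uL] exR injR.
have [y Py Rsy] := exR s (mem_head _ _).
have LsL t : t \in L -> t \in s :: L by rewrite inE orbC => ->.
rewrite (cardD1 y) Py add1n ltnS; apply: IHL => // [t Lt | t t' Lt Lt'].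
  have [y' Py' Rty'] := exR t (LsL t Lt).
  exists y' => //; rewrite inE Py' andbT; apply: contraNneq sL => eq_y'y.
  by rewrite (injR s t (mem_head _ _) (LsL t Lt) y) // -eq_y'y.
by apply: injR; apply: LsL.
Qed.

Definition is_pair (Sigma : eqType) (V : Type) (r : rule Sigma V) : bool :=
  if r is RPair _ _ then true else false.

Section Straddling.
Variables (Sigma : eqType) (V : finType) (G : SLP Sigma V).

Lemma expands_fun X w1 w2 : expands G X w1 -> expands G X w2 -> w1 = w2.
Proof.
move=> exp1; elim: exp1 w2 => [Y a rhoY | Y A B u v rhoY _ IHu _ IHv] w2 exp2.
  by case: Y w2 / exp2 rhoY => [? a' -> [->] | ? ? ? ? ? -> _ _].
case: Y w2 / exp2 rhoY => [? ? -> // | ? A' B' u' v' -> expu expv [eqA eqB]].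
by subst A' B'; rewrite (IHu _ expu) (IHv _ expv).
Qed.

Definition straddles (Y : V) (s : seq Sigma) : Prop :=
  exists A B u v,
    [/\ slp_rho G Y = RPair Sigma A B, expands G A u, expands G B v & crosses u v s].

Definition pair_rules : pred V := [pred X | is_pair (slp_rho G X)].

Lemma straddles_pair Y s : straddles Y s -> Y \in pair_rules.
Proof. by case=> [A [B [u [v [rhoY _ _ _]]]]]; rewrite inE rhoY. Qed.

Lemma expands_straddles X w s :
  expands G X w -> infix s w -> 1 < size s -> exists Y, straddles Y s.
Proof.
elim=> [Y a _ | Y A B u v rhoY expu IHu expv IHv].
  by move=> /size_infix le_s1 /leq_trans/(_ le_s1).
case/infix_catP=> [/IHu | /IHv | cross_s] //.
by move=> _; exists Y, A, B, u, v.
Qed.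

Lemma straddles_delimited_uniq d Y s t : straddles Y s -> straddles Y t ->
  delimited d s -> delimited d t -> s = t.
Proof.
case=> [A [B [u [v [rhoY expu expv cross_s]]]]].
case=> [A' [B' [u' [v' [rhoY' expu' expv' cross_t]]]]].
move: rhoY'; rewrite rhoY => -[eqA eqB]; subst A' B'.
rewrite -(expands_fun expu expu') -(expands_fun expv expv') in cross_t.
exact: crosses_delimited_uniq cross_s cross_t.
Qed.

Lemma slp_sizeE : slp_size G = #|V| + #|pair_rules|.
Proof.
rewrite /slp_size (eq_bigr (fun X => 1 + (X \in pair_rules))) => [|X _].
  by rewrite big_split /= sum1_card -[#|pair_rules|]sum1_card [in RHS]big_mkcond.
by rewrite /pair_rules inE; case: (slp_rho G X).
Qed.

Lemma card_pair_rules_lt : #|pair_rules| < slp_size G.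
Proof.
by rewrite slp_sizeE -addn1 addnC leq_add2r; apply/card_gt0P; exists (slp_start G).
Qed.

(* Each delimited factor straddles a pair rule, which determines it. *)
Lemma size_delimited_factors_lt X w (d : Sigma) (L : seq (seq Sigma)) :
  expands G X w -> uniq L -> all (fun s => infix s w) L -> {in L, forall s, delimited d s} ->
  size L < slp_size G.
Proof.
move=> expw uL /allP infL delL; apply: leq_trans card_pair_rules_lt; rewrite ltnS.
apply: (@uniq_leq_card_rel _ _ (fun s Y => straddles Y s)) => // [s Ls | s t Ls Lt Y sY tY].
  have lt1s : 1 < size s by have [x -> _] := delL s Ls; rewrite /= size_rcons.
  have [Y sY] := expands_straddles expw (infL s Ls) lt1s.
  by exists Y => //; apply: straddles_pair sY.
exact: (straddles_delimited_uniq sY tY (delL s Ls) (delL t Lt)).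
Qed.

End Straddling.

Lemma low_bits_inj m a b : a < 2 ^ m -> b < 2 ^ m ->
  (forall e, e < m -> odd (a %/ 2 ^ e) = odd (b %/ 2 ^ e)) -> a = b.
Proof.
elim: m a b => [|m IHm] a b; first by rewrite expn0 !ltnS !leqn0 => /eqP-> /eqP->.
rewrite expnSr -!ltn_divLR // => lt_a lt_b eq_bits.
have eq_half : a %/ 2 = b %/ 2.
  by apply: IHm => // e lt_em; rewrite -!divnMA -expnS eq_bits.
have := eq_bits 0 (ltn0Sn m); rewrite expn0 !divn1 => eq_odd.
by rewrite (divn_eq a 2) (divn_eq b 2) !modn2 eq_half eq_odd.
Qed.

Section BinaryRows.
Variables (Sigma : eqType) (c0 c1 cd : Sigma).
Hypotheses (c01 : c0 != c1) (c0d : c0 != cd) (c1d : c1 != cd).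
Variable n : nat.

Definition bin_row (k : nat) : seq Sigma := [seq bin_entry c0 c1 cd n k l | l <- iota 1 n.+2].

Lemma bin_entry_inner k l : 1 < l < n.+2 ->
  bin_entry c0 c1 cd n k l = if odd ((k - 1) %/ 2 ^ (n - (l - 1))) then c1 else c0.
Proof.
by case/andP=> lt1l ltln; rewrite /bin_entry gtn_eqF // ltn_eqF.
Qed.

Lemma bin_row_delimited k : delimited cd (bin_row k).
Proof.
exists [seq bin_entry c0 c1 cd n k l | l <- iota 2 n].
  have iota_ends : iota 1 n.+2 = 1 :: rcons (iota 2 n) n.+2.
    by rewrite -cats1 -(addn1 n) /= iotaD add2n addn1.
  by rewrite /bin_row iota_ends /= map_rcons /bin_entry /= !eqxx.
apply/negP => /mapP[l]; rewrite mem_iota => lim.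
rewrite bin_entry_inner; last by lia.
by case: ifP => _ /eqP; rewrite eq_sym ?(negbTE c0d) ?(negbTE c1d).
Qed.

Lemma bin_row_inj k k' : 0 < k <= 2 ^ n -> 0 < k' <= 2 ^ n -> bin_row k = bin_row k' -> k = k'.
Proof.
move=> /andP[k_gt0 k_le] /andP[k'_gt0 k'_le] eq_rows.
suff : k - 1 = k' - 1 by lia.
apply: (@low_bits_inj n); try lia.
move=> e lt_en; have lt_col : 1 < n - e + 1 < n.+2 by lia.
have nth_row r : nth cd (bin_row r) (n - e) = bin_entry c0 c1 cd n r (n - e + 1).
  by rewrite (nth_map 0) ?size_iota ?nth_iota 1?addnC //; lia.
move: (nth_row k); rewrite eq_rows nth_row !bin_entry_inner //.
have -> : n - (n - e + 1 - 1) = e by lia.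
by case: odd; case: odd => // /eqP; rewrite ?(negbTE c01) // eq_sym (negbTE c01).
Qed.

Lemma shiftbin_entry_block i j l : 0 < l <= n.+2 ->
  shiftbin_entry c0 c1 cd n i (j * n.+2 + l) =
  if j < i <= j + 2 ^ n then bin_entry c0 c1 cd n (i - j) l else c0.
Proof.
move=> /andP[l_gt0 l_le]; rewrite /shiftbin_entry -addnBA // divnMDl //.
have -> : (l - 1) %/ n.+2 = 0 by apply: divn_small; lia.
have -> : (j + 0 + 1 <= i <= j + 0 + 1 + 2 ^ n - 1) = (j < i <= j + 2 ^ n) by lia.
case: ifP => // /andP[lt_ji _]; congr bin_entry; first by lia.
by rewrite addn0 addn1 subn1 /= addKn.
Qed.

Lemma bin_row_infix_shiftbin_row i k : 0 < k <= 2 ^ n -> k <= i -> i - k < 2 ^ n ->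
  infix (bin_row k) (shiftbin_row c0 c1 cd n i).
Proof.
move=> /andP[k_gt0 k_le] le_ki lt_ikN; set j := i - k.
have split_cols : 2 ^ n * n.+2 = j * n.+2 + (n.+2 + (2 ^ n - j.+1) * n.+2).
  by rewrite -mulSn -mulnDl; congr (_ * _); lia.
rewrite /shiftbin_row split_cols !iotaD !map_cat; apply/infix_catl/infix_catr.
rewrite [X in infix _ X](_ : _ = bin_row k) ?infix_refl //.
rewrite addnC iotaDl -map_comp /bin_row; apply/eq_in_map => l; rewrite mem_iota => l_in.
rewrite /= shiftbin_entry_block; last by lia.
by rewrite ifT ?subKn //; lia.
Qed.

End BinaryRows.

Unset Implicit Arguments.

Theorem mainTheorem6 (Sigma : eqType) (c0 c1 cd : Sigma) :
  c0 != c1 -> c0 != cd -> c1 != cd ->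
  forall (n : nat), 1 <= n ->
  forall (i : nat), 1 <= i <= 2 * 2 ^ n ->
  forall (V : finType) (G : SLP Sigma V), acyclic G ->
  forall (w : seq Sigma), derives G w ->
  (exists u v, w = u ++ shiftbin_row c0 c1 cd n i ++ v) ->
  minn i (2 * 2 ^ n - i + 1) <= slp_size G.
Proof.
move=> c01 c0d c1d n _ i /andP[i_gt0 i_le] V G _ w der_w [u [v def_w]].
set N := 2 ^ n; set ks := iota (i - N).+1 (minn i N - (i - N)).
have ks_range k : k \in ks -> [/\ 0 < k <= N, k <= i & i - k < N].
  by rewrite mem_iota => /andP[? ?]; split; try apply/andP; lia.
have : size (map (bin_row c0 c1 cd n) ks) < slp_size G.
  apply: (size_delimited_factors_lt (d := cd) der_w).
  - rewrite map_inj_in_uniq ?iota_uniq // => k k' /ks_range[? _ _] /ks_range[? _ _].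
    exact: bin_row_inj.
  - apply/allP=> _ /mapP[k /ks_range[? ? ?] ->].
    by rewrite def_w; apply/infix_catl/infix_catr/bin_row_infix_shiftbin_row.
  - by move=> _ /mapP[k _ ->]; apply: bin_row_delimited.
rewrite size_map size_iota; lia.
Qed.
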